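(* Let $S$ be an anti-rectangular AG-groupoid. Every ideal of $S$ is prime if and only if every ideal of $S$ is idempotent and the set of ideals of $S$ is totally ordered under inclusion (for any ideals $I,J$, either $I\subseteq J$ or $J\subseteq I$).
   Context: An AG-groupoid is a set $S$ with a binary operation satisfying $(ab)c=(cb)a$ for all $a,b,c\in S$. It is anti-rectangular if $a=(ba)b$ for all $a,b\in S$. For nonempty subsets, $AB=\{ab:a\in A,b\in B\}$, $I^{2}=II$. An ideal of $S$ is a nonempty subset $I$ with $SI\subseteq I$ and $IS\subseteq I$; it is idempotent if $I^{2}=I$. An ideal $P$ is prime if for all ideals $A,B$ of $S$, $AB\subseteq P$ implies $A\subseteq P$ or $B\subseteq P$. *)

Set Implicit Arguments.

Definition subset {S : Type} (A B : S -> Prop) : Prop := forall x, A x -> B x.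

Definition setmul {S : Type} (op : S -> S -> S) (A B : S -> Prop) : S -> Prop :=
  fun x => exists a b, A a /\ B b /\ x = op a b.

Definition is_AG_groupoid {S : Type} (op : S -> S -> S) : Prop :=
  forall a b c, op (op a b) c = op (op c b) a.

Definition anti_rectangular {S : Type} (op : S -> S -> S) : Prop :=
  forall a b, a = op (op b a) b.

Definition full {S : Type} : S -> Prop := fun _ => True.

Definition is_ideal {S : Type} (op : S -> S -> S) (I : S -> Prop) : Prop :=
  (exists x, I x) /\ subset (setmul op full I) I /\ subset (setmul op I full) I.

Definition idempotent_ideal {S : Type} (op : S -> S -> S) (I : S -> Prop) : Prop :=
  subset (setmul op I I) I /\ subset I (setmul op I I).

Definition prime_ideal {S : Type} (op : S -> S -> S) (P : S -> Prop) : Prop :=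
  is_ideal op P /\
  forall A B, is_ideal op A -> is_ideal op B ->
    subset (setmul op A B) P -> subset A P \/ subset B P.


(* In an anti-rectangular groupoid every element factors as
   x = (x x) x, and x x lies in any ideal containing x; hence every ideal I
   satisfies I ⊆ I^2 ⊆ I, i.e. is idempotent -- no primality is needed.
   For totality, the intersection I ∩ J of two ideals is an ideal containing
   the product IJ, so if I ∩ J is prime then I ⊆ I ∩ J or J ⊆ I ∩ J.
   Conversely, if the ideals are idempotent and totally ordered and AB ⊆ P
   with, say, A ⊆ B, then A = AA ⊆ AB ⊆ P, so P is prime.
   These facts are proved below for an arbitrary binary operation, and theorem5 then assembles the two directions from them. *)

Section Ideals.

Context {S : Type} {op : S -> S -> S}.

Lemma setmul_mono {A A' B B' : S -> Prop} :
  subset A A' -> subset B B' -> subset (setmul op A B) (setmul op A' B').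
Proof.
  intros HA HB x [a [b [Ha [Hb ->]]]].
  exists a, b. auto.
Qed.

Lemma setmul_ideal_left {I J : S -> Prop} :
  is_ideal op I -> subset (setmul op I J) I.
Proof.
  intros [_ [_ HIR]] x [a [b [Ha [Hb ->]]]].
  apply HIR. exists a, b. repeat split; auto.
Qed.

Lemma setmul_ideal_right {I J : S -> Prop} :
  is_ideal op J -> subset (setmul op I J) J.
Proof.
  intros [_ [HJL _]] x [a [b [Ha [Hb ->]]]].
  apply HJL. exists a, b. repeat split; auto.
Qed.

(* The intersection of two ideals is an ideal; it is nonempty because it
   contains the product of an element of I with an element of J. *)
Lemma ideal_inter {I J : S -> Prop} :
  is_ideal op I -> is_ideal op J -> is_ideal op (fun x => I x /\ J x).
Proof.
  intros HI HJ.
  pose proof HI as [[x Hx] [HIL HIR]].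
  pose proof HJ as [[y Hy] [HJL HJR]].
  split; [|split].
  - exists (op x y). split.
    + apply (setmul_ideal_left (J := J) HI). exists x, y. auto.
    + apply (setmul_ideal_right (I := I) HJ). exists x, y. auto.
  - intros z [a [b [Ha [[Hb1 Hb2] ->]]]]. split.
    + apply HIL. exists a, b. auto.
    + apply HJL. exists a, b. auto.
  - intros z [a [b [[Ha1 Ha2] [Hb ->]]]]. split.
    + apply HIR. exists a, b. auto.
    + apply HJR. exists a, b. auto.
Qed.

(* If the intersection of two ideals is prime, the two ideals are
   comparable: their product lies in the intersection. *)
Lemma prime_inter_comparable {I J : S -> Prop} :
  is_ideal op I -> is_ideal op J ->
  prime_ideal op (fun x => I x /\ J x) -> subset I J \/ subset J I.
Proof.
  intros HI HJ [_ Hprime].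
  assert (Hprod : subset (setmul op I J) (fun x => I x /\ J x)).
  { intros z Hz. split.
    - exact (setmul_ideal_left HI z Hz).
    - exact (setmul_ideal_right HJ z Hz). }
  destruct (Hprime I J HI HJ Hprod) as [H | H].
  - left. intros x Hx. exact (proj2 (H x Hx)).
  - right. intros x Hx. exact (proj1 (H x Hx)).
Qed.

Lemma idempotent_square_sub {A P : S -> Prop} :
  idempotent_ideal op A -> subset (setmul op A A) P -> subset A P.
Proof.
  intros [_ HAA] Hs x Hx. exact (Hs x (HAA x Hx)).
Qed.

Lemma subset_refl (A : S -> Prop) : subset A A.
Proof. intros x Hx. exact Hx. Qed.

(* If all ideals are idempotent and pairwise comparable, every ideal is
   prime: for A ⊆ B we get A = AA ⊆ AB, and for B ⊆ A we get B = BB ⊆ AB. *)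
Lemma idempotent_total_prime :
  (forall I, is_ideal op I -> idempotent_ideal op I) ->
  (forall I J, is_ideal op I -> is_ideal op J -> subset I J \/ subset J I) ->
  forall P, is_ideal op P -> prime_ideal op P.
Proof.
  intros Hid Htot P HP. split; [exact HP|].
  intros A B HA HB Hs.
  destruct (Htot A B HA HB) as [HAB | HBA].
  - left. apply (idempotent_square_sub (Hid A HA)).
    intros x Hx. apply Hs. exact (setmul_mono (subset_refl A) HAB x Hx).
  - right. apply (idempotent_square_sub (Hid B HB)).
    intros x Hx. apply Hs. exact (setmul_mono HBA (subset_refl B) x Hx).
Qed.

(* In an anti-rectangular groupoid every ideal is idempotent: an element x
   of I factors as x = (x x) x with x x ∈ I. *)
Lemma anti_rectangular_ideal_idempotent {I : S -> Prop} :
  anti_rectangular op -> is_ideal op I -> idempotent_ideal op I.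
Proof.
  intros hAR HI. split.
  - exact (setmul_ideal_left HI).
  - intros x Hx. exists (op x x), x. repeat split.
    + apply (setmul_ideal_left (J := I) HI). exists x, x. auto.
    + exact Hx.
    + exact (hAR x x).
Qed.

End Ideals.

Theorem theorem5 (S : Type) (op : S -> S -> S)
  (hAG : is_AG_groupoid op) (hAR : anti_rectangular op) :
  (forall I, is_ideal op I -> prime_ideal op I) <->
  ((forall I, is_ideal op I -> idempotent_ideal op I) /\
   (forall I J, is_ideal op I -> is_ideal op J -> subset I J \/ subset J I)).
Proof.
  split.
  - intros Hprime. split.
    + intros I HI. exact (anti_rectangular_ideal_idempotent hAR HI).
    + intros I J HI HJ.
      exact (prime_inter_comparable HI HJ (Hprime _ (ideal_inter HI HJ))).
  - intros [Hid Htot]. exact (idempotent_total_prime Hid Htot).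
Qed.
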